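(* Let $p\ge5$ and consider the white metallic tree $\mathcal W_\lambda$ under the leftmost assignment. Let $\nu$ be a node, $u$ its metallic code, and $w$ the metallic code of $\nu-1$ (empty if $\nu=1$). Then: (i) if $\nu$ is black, its signature is $1$ or $2$, and its $p-3$ sons in increasing order have metallic codes $w\,(h+1)$ for $h=1,\dots,p-4$, then $u\,0$; (ii) if $\nu$ is white with signature $0$, its $p-2$ sons in increasing order have codes $w\,h$ for $h=1,\dots,p-4$, then $u\,0$, then $u\,1$; (iii) if $\nu$ is white with signature $1$, its sons have codes $w\,(h+1)$ for $h=1,\dots,p-4$, then $u\,0$, then $u\,1$; (iv) if $\nu$ is white with signature $a\in\{2,\dots,p-3\}$, its sons have codes $w\,h$ for $h=1,\dots,p-3$, then $u\,0$.
   Context: Fix $p\ge5$. Metallic numbers: $m_{-1}=0$, $m_0=1$, $m_{n+2}=(p-2)m_{n+1}-m_n$. With $d=p-3$, $c=p-4$, the metallic code of a positive integer $n$ is the unique word $a_k\cdots a_0$ over $\{0,\dots,p-3\}$ with $a_k\ne0$, $n=\sum a_im_i$, containing no factor $d\,c^j\,d$ ($j\ge0$); the code of $0$ is empty; the signature of $n$ is the last digit $a_0$; $w\,e$ denotes $w$ followed by the digit $e$. White metallic tree under an assignment $\alpha$, $\mathcal W_\alpha$: nodes are the positive integers, black or white; root $1$ is white; nodes processed in increasing order, node $\nu$ receives $p-2$ sons if white and $p-3$ if black, namely the smallest unused integers in increasing order; the assignment gives the position of the unique black son among the sons, other sons being white. The leftmost assignment $\lambda$ puts the black son at position $1$ (the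 smallest son). *)

From mathcomp Require Import all_boot.
Set Implicit Arguments. Unset Strict Implicit. Unset Printing Implicit Defensive.

(* Metallic numbers m_0, m_1, ... (m_{-1} = 0 is implicit: m_1 = (p-2) m_0 - m_{-1}). *)
Fixpoint mpair (p n : nat) : nat * nat :=
  match n with
  | 0 => (1, p - 2)
  | n'.+1 => let: (a, b) := mpair p n' in (b, (p - 2) * b - a)
  end.
Definition metallic (p n : nat) : nat := (mpair p n).1.

(* Words are seq nat written most significant digit first: [:: a_k; ...; a_0].
   Hence "w e" (w followed by digit e) is [rcons w e], and the last digit is a_0. *)
Definition mvalue (p : nat) (s : seq nat) : nat :=
  \sum_(i < size s) nth 0 (rev s) i * metallic p i.

Definition metallic_code (p n : nat) (s : seq nat) : Prop :=
  [/\ all (fun a => a <= p - 3) s,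
      s = [::] \/ head 0 s <> 0,
      mvalue p s = n &
      forall j : nat, ~~ infix ((p - 3) :: rcons (nseq j (p - 4)) (p - 3)) s].

Definition signature (s : seq nat) : nat := last 0 s.

(* The white metallic tree under an assignment alpha : nat -> nat, where
   alpha nu (in 1..#sons) is the position of the unique black son of node nu.
   State after processing nodes 1..k : (next unused integer, colours of nodes
   1..next-1), colour true = black. *)
Definition nsons (p : nat) (black : bool) : nat := if black then p - 3 else p - 2.

Fixpoint tstate (p : nat) (alpha : nat -> nat) (k : nat) : nat * seq bool :=
  match k with
  | 0 => (2, [:: false])
  | k'.+1 =>
      let: (next, cols) := tstate p alpha k' in
      let b := nth false cols k' in
      let deg := nsons p b in
      (next + deg, cols ++ [seq (i.+1 == alpha k) | i <- iota 0 deg])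
  end.

Definition is_black (p : nat) (alpha : nat -> nat) (nu : nat) : bool :=
  nth false (tstate p alpha nu).2 nu.-1.

Definition sons (p : nat) (alpha : nat -> nat) (nu : nat) : seq nat :=
  iota (tstate p alpha nu.-1).1 (nsons p (is_black p alpha nu)).

Definition leftmost : nat -> nat := fun _ => 1.

Definition have_codes (p : nat) (S : seq nat) (L : seq (seq nat)) : Prop :=
  size S = size L /\
  forall i, i < size S -> metallic_code p (nth 0 S i) (nth [::] L i).

From mathcomp Require Import all_boot zify.
Set Implicit Arguments. Unset Strict Implicit. Unset Printing Implicit Defensive.

(* Decrementing a code has an explicit form (the low end 0^k a becomes
   d c^(k-1) (a-1)), from which the value of u0 exceeds that of w0 by p-3 or p-2
   according as the signature of nu is 0 or not.  Under the leftmost assignment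
   the black nodes are exactly the first sons.  By strong induction on n, the
   first son of n+1 has code c g(c), where c is the code of n and g(s) = 2 if s
   stripped of its trailing 1s is empty or ends with 0, g(s) = 1 otherwise; hence
   nu is black iff its code has the form s g(s).  The induction step compares,
   digit by digit, the number of sons of nu with the growth from w0 to u0.  The
   sons of nu are then the consecutive integers from w g(w) up to u0 (or u1),
   which gives the four cases. *)

Section AdmissibleWords.
Variable p : nat.

Definition forbidden j := (p - 3) :: rcons (nseq j (p - 4)) (p - 3).

(* On a reversed code, [starts_cjd t] says that the code ends with d c^j, so
   that appending the digit d would create a forbidden factor. *)
Fixpoint starts_cjd (t : seq nat) : bool :=
  if t is a :: t' then (a == p - 3) || (a == p - 4) && starts_cjd t' else false.

Fixpoint admissible (t : seq nat) : bool :=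
  if t is a :: t' then
    [&& a <= p - 3, admissible t' & (a == p - 3) ==> ~~ starts_cjd t']
  else true.

Lemma admissible_cons a t : admissible (a :: t) =
  [&& a <= p - 3, admissible t & (a == p - 3) ==> ~~ starts_cjd t].
Proof. by []. Qed.

Lemma starts_cjdP t :
  reflect (exists j, prefix (rcons (nseq j (p - 4)) (p - 3)) t) (starts_cjd t).
Proof.
elim: t => [|a t IH] /=; first by apply: ReflectF => -[[|j]].
apply: (iffP orP) => [[/eqP->|/andP[/eqP-> /IH[j Hj]]]|[[|j]] /= /andP[/eqP<-]].
- by exists 0; rewrite /= eqxx prefix0s.
- by exists j.+1; rewrite /= eqxx.
- by left.
- by move=> Hj; right; rewrite eqxx; apply/IH; exists j.
Qed.

Lemma admissibleP t :
  admissible t <-> all (fun a => a <= p - 3) t /\ forall j, ~~ infix (forbidden j) t.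
Proof.
elim: t => [|a t IH]; first by split=> // _ [].
have forbidden_cons j : infix (forbidden j) (a :: t) =
    (a == p - 3) && prefix (rcons (nseq j (p - 4)) (p - 3)) t || infix (forbidden j) t.
  by rewrite infix_consl /forbidden prefix_cons eq_sym.
split=> [/and3P[Ha /IH[At Ft] /implyP Hd]|[/andP[Ha At] Ft]].
  split=> [|j]; first by rewrite /= Ha.
  rewrite forbidden_cons negb_or Ft andbT; apply/negP=> /andP[/Hd/starts_cjdP Hs Hj].
  by apply: Hs; exists j.
have Ft' j : ~~ infix (forbidden j) t by move: (Ft j); rewrite forbidden_cons negb_or => /andP[].
rewrite /= Ha (IH.2 (conj At Ft')); apply/implyP=> Ea; apply/starts_cjdP=> -[j Hj].
by move: (Ft j); rewrite forbidden_cons Ea Hj.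
Qed.

Lemma admissible_rev t : admissible (rev t) = admissible t.
Proof.
have forbidden_rev j : rev (forbidden j) = forbidden j.
  by rewrite /forbidden rev_cons rev_rcons rev_nseq.
suff adm_rev s : admissible s -> admissible (rev s).
  by apply/idP/idP => /adm_rev; rewrite ?revK.
move=> /admissibleP[A F]; apply/admissibleP; split=> [|j]; first by rewrite all_rev.
by rewrite -forbidden_rev infix_rev.
Qed.

End AdmissibleWords.

Section MetallicNumbers.
Variable p : nat.
Hypothesis p5 : 5 <= p.
Local Notation m := (metallic p).

Lemma metallic_growth n : 0 < m n /\ 2 * m n <= m n.+1.
Proof.
have -> : m n.+1 = (mpair p n).2 by rewrite /metallic /=; case: (mpair p n).
rewrite /metallic; elim: n => [|n IH] /=; first lia.
by case: (mpair p n) IH => a b /= [? ?]; nia.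
Qed.

Lemma metallicSS n : m n.+2 + m n = (p - 2) * m n.+1.
Proof.
have [_ le_n] := metallic_growth n; have [_ le_n1] := metallic_growth n.+1.
have -> : m n.+2 = (p - 2) * m n.+1 - m n by rewrite /metallic /=; case: (mpair p n).
nia.
Qed.

Lemma metallic_ge n : (p - 3) * m n <= m n.+1.
Proof.
case: n => [|n] /=; first by rewrite /metallic /=; lia.
have := metallicSS n; have [_ ?] := metallic_growth n; nia.
Qed.

Lemma mvalue_cons a s : mvalue p (a :: s) = a * m (size s) + mvalue p s.
Proof.
rewrite /mvalue rev_cons /= big_ord_recr /= nth_rcons size_rev ltnn eqxx addnC.
by congr (_ + _); apply: eq_bigr => i _; rewrite nth_rcons size_rev ltn_ord.
Qed.

Lemma mvalue_bound s : admissible p s ->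
  mvalue p s < m (size s) /\
  (~~ starts_cjd p s -> (p - 3) * m (size s) + mvalue p s < m (size s).+1).
Proof.
elim: s => [|a s IH] /=; first by rewrite /mvalue big_ord0 /metallic /=; lia.
case/and3P=> Ha /IH[lt_s lt_s_cjd] /implyP Hd; rewrite mvalue_cons.
have := metallicSS (size s); have := metallic_ge (size s).
split; [case: (eqVneq a (p - 3)) => [Ea|Na] | case/norP=> Na /nandP Hc].
- by have := lt_s_cjd (Hd (introT eqP Ea)); rewrite Ea; nia.
- have : a * m (size s) <= (p - 4) * m (size s) by apply: leq_mul; lia.
  nia.
- case: (eqVneq a (p - 4)) Hc => [-> [|/lt_s_cjd]|Na4 _]; [by [] | nia |].
  have : a * m (size s) <= (p - 5) * m (size s) by apply: leq_mul; lia.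
  nia.
Qed.

Lemma mvalue_inj_size s t : admissible p s -> admissible p t ->
  size s = size t -> mvalue p s = mvalue p t -> s = t.
Proof.
elim: s t => [|a s IH] [|b t] //= /and3P[_ As _] /and3P[_ At _] [size_st].
rewrite !mvalue_cons -size_st => E.
have [lt_s _] := mvalue_bound As; have [lt_t _] := mvalue_bound At.
rewrite -size_st in lt_t.
have Eab : a = b.
  by move: (congr1 (divn^~ (m (size s))) E); rewrite !divnMDl ?divn_small ?addn0 //; lia.
by rewrite Eab (IH t) //; move: E; rewrite Eab; lia.
Qed.

Lemma metallic_code_uniq n s t : metallic_code p n s -> metallic_code p n t -> s = t.
Proof.
(* Pad the shorter code with leading zeros, then compare codes of equal length. *)
have pad k u : admissible p (ncons k 0 u) = admissible p u /\ mvalue p (ncons k 0 u) = mvalue p u.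
  have /negbTE d_neq0 : 0 != p - 3 by lia.
  by elim: k => [|k [IHa IHv]] //=; rewrite mvalue_cons IHa IHv d_neq0 andbT.
wlog le_st : s t / size s <= size t => [hw Cs Ct|].
  by case: (leqP (size s) (size t)) => [|/ltnW] le; [apply: hw | symmetry; apply: hw].
case=> As Hs Es Fs [At Ht Et Ft].
have [Ap Vp] := pad (size t - size s) s.
have Est : ncons (size t - size s) 0 s = t.
  apply: mvalue_inj_size; rewrite ?Ap ?Vp ?Es ?Et ?size_ncons ?subnK //.
  - exact/admissibleP.
  - exact/admissibleP.
case: (size t - size s) Est => [//|k] Est.
by case: Ht => Ht; rewrite -Est in Ht.
Qed.

End MetallicNumbers.

Section ReversedCodes.
Variable p : nat.
Local Notation m := (metallic p).

(* [rvalue k t] weights the digits of [t] by m_k, m_(k+1), ...; in particular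
   [rvalue 1 t] is the value of the code followed by the digit 0. *)
Fixpoint rvalue k (t : seq nat) : nat :=
  if t is a :: t' then a * m k + rvalue k.+1 t' else 0.

Lemma mvalue_rev s : mvalue p s = rvalue 0 (rev s).
Proof.
have rvalue_sum k t : \sum_(i < size t) nth 0 t i * m (k + i) = rvalue k t.
  elim: t k => [|a t IH] k /=; first by rewrite big_ord0.
  rewrite big_ord_recl /= addn0 -IH; congr (_ + _); apply: eq_bigr => i _.
  by rewrite /bump /= add1n addnS addSn.
by rewrite /mvalue -size_rev -rvalue_sum.
Qed.

Definition rcode n t := [/\ admissible p t, t = [::] \/ last 0 t <> 0 & rvalue 0 t = n].

Lemma metallic_code_rev n s : metallic_code p n s <-> rcode n (rev s).
Proof.
have lead_rev : s = [::] \/ head 0 s <> 0 <-> rev s = [::] \/ last 0 (rev s) <> 0.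
  case: s => [|a s]; first by split=> _; left.
  by rewrite rev_cons last_rcons; split=> -[] // H; [right | case: (rev s) H | right].
rewrite /rcode admissible_rev -mvalue_rev.
split=> [[A /lead_rev H E F]|[/admissibleP[A F] /lead_rev H E]]; split=> //; exact/admissibleP.
Qed.

Lemma rcode_cons n e t : rcode n t -> admissible p (e :: t) -> (t = [::] -> 0 < e) ->
  rcode (e + rvalue 1 t) (e :: t).
Proof.
case=> _ Ht _ A He; split=> //=; last by rewrite muln1.
by case: t Ht He {A} => [_ /(_ erefl) He|b t [//|Ht] _]; right=> //=; lia.
Qed.

Lemma rcode_behead n a t : rcode n (a :: t) -> rcode (rvalue 0 t) t.
Proof.
case=> /and3P[_ A _] Ht _; split=> //.
by case: t Ht {A} => [|b t] [//|Ht]; [left | right].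
Qed.

Hypothesis p5 : 5 <= p.

Lemma rvalueSS k t : rvalue k.+2 t + rvalue k t = (p - 2) * rvalue k.+1 t.
Proof.
elim: t k => [|a t IH] k /=; first lia.
by have := IH k.+1; have := metallicSS p5 k; nia.
Qed.

Lemma rvalue_double k t : 2 * rvalue k t <= rvalue k.+1 t.
Proof.
elim: t k => [|a t IH] k //=; have [_ le_m] := metallic_growth p5 k.
have : a * (2 * m k) <= a * m k.+1 by rewrite leq_mul2l le_m orbT.
by have := IH k.+1; lia.
Qed.

Lemma rcode_uniq n t t' : rcode n t -> rcode n t' -> t = t'.
Proof.
rewrite -[t]revK -[t']revK -!metallic_code_rev => C C'.
by rewrite (metallic_code_uniq p5 C C').
Qed.

End ReversedCodes.

Section Predecessor.
Variable p : nat.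
Hypothesis p5 : 5 <= p.
Local Notation m := (metallic p).
Local Notation rvalue := (rvalue p).
Local Notation rcode := (rcode p).

(* The low end 0^k a of a code becomes c^(k-1) d (a-1); the code [:: 1] of 1
   becomes the empty code of 0 rather than [:: 0]. *)
Fixpoint prev_code (t : seq nat) : seq nat :=
  match t with
  | [::] => [::]
  | 0 :: t' => (if head 0 t' == 0 then p - 4 else p - 3) :: prev_code t'
  | [:: 1] => [::]
  | a.+1 :: t' => a :: t'
  end.

Definition shift_gap t := if head 0 t == 0 then p - 3 else p - 2.

Lemma rvalue_prev t : last 0 t != 0 ->
  rvalue 0 (prev_code t) + 1 = rvalue 0 t /\
  rvalue 1 (prev_code t) + shift_gap t = rvalue 1 t.
Proof.
have m0 : m 0 = 1 by [].
have m1 : m 1 = p - 2 by [].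
elim: t => [|[|a] t IH] //= Ht; rewrite /shift_gap /= m1 ?muln1.
  have [] := IH Ht; have := rvalueSS p5 0 t; have := rvalueSS p5 0 (prev_code t).
  by rewrite /shift_gap; case: ifP => _ /=; nia.
by case: a t {IH Ht} => [|a] [|b t] /=; rewrite ?m0 ?m1; nia.
Qed.

Lemma prev_codeS a t :
  prev_code (a.+1 :: t) = if (a == 0) && (t == [::]) then [::] else a :: t.
Proof. by case: a t => [|a] [|b t]. Qed.

Lemma admissible_prev t : admissible p t -> last 0 t != 0 ->
  admissible p (prev_code t) /\ starts_cjd p (prev_code t) = (head 0 t == 0).
Proof.
have /negbTE c_neq_d : p - 4 != p - 3 by lia.
elim: t => [|[|a] t IH] //; rewrite admissible_cons => /and3P[Ha At Hd] Ht.
  have [Ap Sp] := IH At Ht; rewrite /= Ap Sp.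
  by case: (head 0 t == 0); rewrite /= ?c_neq_d ?eqxx ?andbT; split=> //; lia.
rewrite prev_codeS; case: ifP => _ //=.
have /negbTE-> : a != p - 3 by lia.
rewrite At andbT; split; first lia.
case: (eqVneq a (p - 4)) Hd => [->|] //=.
have -> : (p - 4).+1 = p - 3 by lia.
have /negbTE-> : p - 3 != 0 by lia.
by rewrite eqxx => /negbTE->.
Qed.

Lemma last_prev t : last 0 t != 0 -> prev_code t = [::] \/ last 0 (prev_code t) <> 0.
Proof.
elim: t => [|[|a] t IH] // Ht.
  right; rewrite /=; case: (IH Ht) => [->|]; first by case: ifP => _ /=; lia.
  by case: (prev_code t).
rewrite prev_codeS; case: ifP => [_|/nandP Hne]; first by left.
by right; case: t {IH} Ht Hne => [_ [/eqP|]|b t /eqP Ht _].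
Qed.

Lemma rcode_succ_last n t : rcode n.+1 t -> last 0 t != 0.
Proof. by case=> _ [->|/eqP]. Qed.

Lemma rcode_prev n t : rcode n.+1 t -> rcode n (prev_code t).
Proof.
move=> /[dup] /rcode_succ_last Ht [At _ Et].
have [E0 _] := rvalue_prev Ht.
by split; [exact: (admissible_prev At Ht).1 | exact: last_prev | lia].
Qed.

Lemma starts_cjd_prev n t : rcode n.+1 t -> starts_cjd p (prev_code t) = (head 0 t == 0).
Proof. by move=> /[dup] /rcode_succ_last Ht [At _ _]; exact: (admissible_prev At Ht).2. Qed.

Lemma rvalue1_prev n t : rcode n.+1 t -> rvalue 1 t = rvalue 1 (prev_code t) + shift_gap t.
Proof. by move=> /rcode_succ_last /rvalue_prev[_ ->]. Qed.

Lemma rcode_below n t k : rcode n t -> k <= n -> exists t', rcode k t'.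
Proof.
move=> Ct /subnK le_kn; rewrite -le_kn in Ct.
elim: (n - k) t Ct => [|i IH] t Ct; first by exists t.
exact: IH (rcode_prev (n := i + k) Ct).
Qed.

End Predecessor.

Section FirstSonDigit.
Variable p : nat.

(* If [t] codes n, then [first_son_digit t :: t] codes the first son of n+1
   ([next_free_code]), and the black nodes are those coded by such words. *)
Fixpoint first_son_digit (t : seq nat) : nat :=
  if t is a :: t' then (if a == 0 then 2 else if a == 1 then first_son_digit t' else 1)
  else 2.

Definition black_code t := if t is a :: t' then a == first_son_digit t' else false.

Lemma first_son_digit_range t : 1 <= first_son_digit t <= 2.
Proof. by elim: t => [|[|[|a]] t IH]. Qed.

Lemma black_code_head t : black_code t -> head 0 t = 1 \/ head 0 t = 2.
Proof. by case: t => [|a t] //= /eqP->; have := first_son_digit_range t; lia. Qed.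

Hypothesis p5 : 5 <= p.

Lemma first_son_digit_cjd t : starts_cjd p t -> first_son_digit t = 1.
Proof.
elim: t => //= a t IH /orP[/eqP->|/andP[/eqP-> /IH fsd1]].
  have /negbTE-> : p - 3 != 0 by lia.
  by have /negbTE-> : p - 3 != 1 by lia.
have /negbTE-> : p - 4 != 0 by lia.
by case: ifP.
Qed.

Lemma rcode_first_son n t : rcode p n t ->
  rcode p (first_son_digit t + rvalue p 1 t) (first_son_digit t :: t).
Proof.
move=> /[dup] Ct [At _ _]; have /andP[ge1 le2] := first_son_digit_range t.
apply: rcode_cons Ct _ _ => //; rewrite admissible_cons At /=; apply/andP; split; first lia.
apply/implyP=> /eqP Ed; apply/negP=> /first_son_digit_cjd; lia.
Qed.

Lemma first_son_digit_prev n t : rcode p n.+1 t ->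
  first_son_digit (prev_code p t) = if black_code t || (head 0 t == 1) then 2 else 1.
Proof.
move=> Ct; case: t Ct => [|a t] Ct; first by case: Ct.
have range := first_son_digit_range t.
case: a Ct => [|[|[|a]]] Ct.
- rewrite first_son_digit_cjd ?(starts_cjd_prev p5 Ct) //=.
  by case: (first_son_digit t) range => [|[|[|f]]].
- by case: t {Ct range} => [|b t] //=; rewrite orbT.
- by rewrite /=; case: (first_son_digit t) range => [|[|[|f]]].
- by rewrite /=; case: (first_son_digit t) range => [|[|[|f]]].
Qed.

Lemma first_son_step n t : rcode p n.+1 t ->
  rvalue p 1 t + first_son_digit t =
  rvalue p 1 (prev_code p t) + first_son_digit (prev_code p t) + nsons p (black_code t).
Proof.
move=> Ct; rewrite (rvalue1_prev p5 Ct) (first_son_digit_prev Ct) -!addnA; congr (_ + _).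
rewrite /shift_gap /nsons; case: t Ct => [|a t] Ct; first by case: Ct.
have := first_son_digit_range t.
by case: a {Ct} => [|[|[|a]]] /=; case: (first_son_digit t) => [|[|[|f]]] //=; lia.
Qed.

End FirstSonDigit.

Section LeftmostTree.
Variable p : nat.
Hypothesis p5 : 5 <= p.

(* [next_free k] is the first son of node k+1. *)
Definition next_free k := (tstate p leftmost k).1.
Definition colours k := (tstate p leftmost k).2.

Lemma tstate_leftmostS k : tstate p leftmost k.+1 =
  (next_free k + nsons p (nth false (colours k) k),
   colours k ++ [seq i == 0 | i <- iota 0 (nsons p (nth false (colours k) k))]).
Proof. by rewrite /= /next_free /colours; case: (tstate p leftmost k). Qed.

Lemma nsons_gt0 b : 0 < nsons p b.
Proof. by rewrite /nsons; case: b; lia. Qed.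

Lemma size_colours k : size (colours k) = (next_free k).-1 /\ k.+2 <= next_free k.
Proof.
elim: k => [|k [size_k ge_k]] //; rewrite /colours /next_free tstate_leftmostS /=.
rewrite size_cat size_map size_iota -/(colours k) size_k.
by have := nsons_gt0 (nth false (colours k) k); lia.
Qed.

Lemma next_free_increasing j k : j < k -> next_free j < next_free k.
Proof.
have step i : next_free i < next_free i.+1.
  by rewrite {2}/next_free tstate_leftmostS /=; have := nsons_gt0 (nth false (colours i) i); lia.
elim: k => [|k IH] //; rewrite ltnS leq_eqVlt => /orP[/eqP->|/IH] //.
by have := step k; lia.
Qed.

Lemma nth_colours k i : i < size (colours k) ->
  nth false (colours k) i = has (fun j => next_free j == i.+1) (iota 0 k).
Proof.
elim: k i => [|k IH] i; first by rewrite /colours /=; case: i.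
have [size_k ge_k] := size_colours k.
have -> : iota 0 k.+1 = iota 0 k ++ [:: k] by rewrite -addn1 iotaD.
rewrite has_cat /= orbF {1 2}/colours tstate_leftmostS /= -/(colours k).
rewrite size_cat => lt_i; rewrite nth_cat; case: ltnP => [lt_ik|ge_ik].
  rewrite IH //; have /negbTE-> : next_free k != i.+1 by lia.
  by rewrite orbF.
move: lt_i; rewrite size_map size_iota => lt_i.
rewrite (nth_map 0) ?nth_iota ?size_iota; try lia.
have /negbTE-> : ~~ has (fun j => next_free j == i.+1) (iota 0 k).
  by apply/hasPn=> j; rewrite mem_iota add0n => /andP[_ /next_free_increasing]; lia.
by apply/eqP/eqP; lia.
Qed.

Lemma is_black_next_free x : 0 < x ->
  reflect (exists j, next_free j = x) (is_black p leftmost x).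
Proof.
move=> x_gt0; have [size_x ge_x] := size_colours x.
rewrite /is_black -/(colours x) nth_colours ?prednK //; last lia.
apply: (iffP hasP) => [[j _ /eqP]|[j Ej]]; first by exists j.
by exists j; rewrite ?mem_iota ?Ej //=; have := (size_colours j).2; lia.
Qed.

Lemma next_freeS k : next_free k.+1 = next_free k + nsons p (is_black p leftmost k.+1).
Proof.
have [size_k ge_k] := size_colours k.
by rewrite /is_black /next_free tstate_leftmostS /= nth_cat -/(colours k) ifT //; lia.
Qed.

End LeftmostTree.

Section LeftmostTreeCodes.
Variable p : nat.
Hypothesis p5 : 5 <= p.
Local Notation next_free := (next_free p).

Lemma is_black_code_below x t : 0 < x -> rcode p x t ->
  (forall j tj, j < x -> rcode p j tj -> next_free j = rvalue p 1 tj + first_son_digit tj) ->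
  is_black p leftmost x = black_code t.
Proof.
move=> x_gt0 Ct IH; apply/(is_black_next_free p5 x_gt0)/idP => [[j Ej]|].
  have lt_jx : j < x by rewrite -Ej; have := (size_colours p5 j).2; lia.
  have [tj Cj] := rcode_below p5 Ct (ltnW lt_jx).
  have := rcode_first_son p5 Cj; rewrite addnC -(IH j) // Ej => Cx.
  by rewrite (rcode_uniq p5 Ct Cx) /= eqxx.
case: t Ct => [|a s] // Ct /eqP Ea.
have [_ _ Ex] := Ct; have := rvalue_double p5 0 s; have := first_son_digit_range s.
rewrite /= muln1 in Ex => range double.
exists (rvalue p 0 s); rewrite (IH _ s); [lia | lia | exact: rcode_behead Ct].
Qed.

Lemma next_free_code n t : rcode p n t -> next_free n = rvalue p 1 t + first_son_digit t.
Proof.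
elim/ltn_ind: n t => -[|n] IH t Ct.
  have C0 : rcode p 0 [::] by split=> //; left.
  by rewrite (rcode_uniq p5 Ct C0).
rewrite next_freeS // (IH n _ _ (rcode_prev p5 Ct)) // (first_son_step p5 Ct).
by congr (_ + nsons p _); apply: is_black_code_below => // j tj /IH; apply.
Qed.

Lemma is_black_code x t : 0 < x -> rcode p x t -> is_black p leftmost x = black_code t.
Proof. by move=> x_gt0 Ct; apply: is_black_code_below => // j tj _; apply: next_free_code. Qed.

End LeftmostTreeCodes.

Lemma have_codes_iota p a L :
  (forall i, i < size L -> metallic_code p (a + i) (nth [::] L i)) ->
  have_codes p (iota a (size L)) L.
Proof.
by move=> CL; split=> [|i]; rewrite size_iota // => lt_i; rewrite nth_iota //; apply: CL.
Qed.

Lemma signature_rev u : signature u = head 0 (rev u).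
Proof. by case/lastP: u => [|s a] //; rewrite rev_rcons /signature last_rcons. Qed.

Section SonsOfANode.
Variable p : nat.
Hypothesis p5 : 5 <= p.
Variables (nu : nat) (u w : seq nat).
Hypotheses (nu_gt0 : 0 < nu) (Cu : metallic_code p nu u) (Cw : metallic_code p nu.-1 w).

Let Ctu : rcode p nu (rev u). Proof. exact/metallic_code_rev. Qed.
Let Ctw : rcode p nu.-1 (rev w). Proof. exact/metallic_code_rev. Qed.
Let Ctu' : rcode p nu.-1.+1 (rev u). Proof. by rewrite prednK. Qed.

Lemma rev_prev_code : rev w = prev_code p (rev u).
Proof. exact: (rcode_uniq p5 Ctw (rcode_prev p5 Ctu')). Qed.

Lemma is_black_signature : is_black p leftmost nu -> signature u = 1 \/ signature u = 2.
Proof. by rewrite (is_black_code p5 nu_gt0 Ctu) signature_rev; apply: black_code_head. Qed.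

Lemma first_son_digit_node :
  first_son_digit (rev w) = if is_black p leftmost nu || (signature u == 1) then 2 else 1.
Proof.
by rewrite rev_prev_code (first_son_digit_prev p5 Ctu') (is_black_code p5 nu_gt0 Ctu) signature_rev.
Qed.

Lemma metallic_code_rcons_prev e : 0 < e -> e < shift_gap p (rev u) ->
  metallic_code p (rvalue p 1 (rev w) + e) (rcons w e).
Proof.
move=> e_gt0 lt_e; apply/metallic_code_rev; rewrite rev_rcons addnC.
apply: (rcode_cons Ctw _ (fun _ => e_gt0)); have [At _ _] := Ctw.
rewrite admissible_cons At rev_prev_code (starts_cjd_prev p5 Ctu') /=.
by move: lt_e; rewrite /shift_gap; case: ifP => _ lt_e; apply/andP; split; try apply/implyP; lia.
Qed.

Lemma metallic_code_rcons e : e <= 1 -> metallic_code p (rvalue p 1 (rev u) + e) (rcons u e).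
Proof.
move=> le_e; apply/metallic_code_rev; rewrite rev_rcons addnC.
have [At _ E] := Ctu; apply: (rcode_cons Ctu).
  by rewrite admissible_cons At /=; apply/andP; split; try apply/implyP; lia.
by move=> Eu; move: E; rewrite Eu /=; lia.
Qed.

Lemma sons_have_codes e0 k l :
  first_son_digit (rev w) = e0 -> l <= 2 ->
  nsons p (is_black p leftmost nu) = k + l -> shift_gap p (rev u) = e0 + k ->
  have_codes p (sons p leftmost nu)
    ([seq rcons w e | e <- iota e0 k] ++ [seq rcons u e | e <- iota 0 l]).
Proof.
move=> fsd_w le_l nsons_nu gap_u.
have shift_u : rvalue p 1 (rev u) = rvalue p 1 (rev w) + e0 + k.
  by rewrite (rvalue1_prev p5 Ctu') -rev_prev_code gap_u addnA.
have := @have_codes_iota p (rvalue p 1 (rev w) + e0)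
  ([seq rcons w e | e <- iota e0 k] ++ [seq rcons u e | e <- iota 0 l]).
rewrite /sons -/(next_free p nu.-1) (next_free_code p5 Ctw) fsd_w nsons_nu.
rewrite size_cat !size_map !size_iota; apply=> i lt_i; rewrite nth_cat size_map size_iota.
have [fsd_ge1 _] := andP (first_son_digit_range (rev w)).
case: ltnP => [lt_ik|ge_ik].
  rewrite (nth_map 0) ?size_iota // nth_iota // -addnA.
  by apply: metallic_code_rcons_prev; lia.
rewrite (nth_map 0) ?size_iota ?nth_iota; try lia.
have -> : rvalue p 1 (rev w) + e0 + i = rvalue p 1 (rev u) + (0 + (i - k)) by lia.
by apply: metallic_code_rcons; lia.
Qed.

End SonsOfANode.

Theorem lemma8 (p nu : nat) (u w : seq nat) :
  5 <= p -> 1 <= nu ->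
  metallic_code p nu u -> metallic_code p nu.-1 w ->
  let S := sons p leftmost nu in
  (* (i) *)
  (is_black p leftmost nu ->
     (signature u = 1 \/ signature u = 2) /\
     have_codes p S ([seq rcons w h.+1 | h <- iota 1 (p - 4)] ++ [:: rcons u 0]))
  /\ (* (ii) *)
  (~~ is_black p leftmost nu -> signature u = 0 ->
     have_codes p S ([seq rcons w h | h <- iota 1 (p - 4)] ++ [:: rcons u 0; rcons u 1]))
  /\ (* (iii) *)
  (~~ is_black p leftmost nu -> signature u = 1 ->
     have_codes p S ([seq rcons w h.+1 | h <- iota 1 (p - 4)] ++ [:: rcons u 0; rcons u 1]))
  /\ (* (iv) *)
  (~~ is_black p leftmost nu -> 2 <= signature u <= p - 3 ->
     have_codes p S ([seq rcons w h | h <- iota 1 (p - 3)] ++ [:: rcons u 0])).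
Proof.
move=> p5 nu_gt0 Cu Cw S.
have fsd_w := first_son_digit_node p5 nu_gt0 Cu Cw.
have codes := sons_have_codes p5 nu_gt0 Cu Cw.
have gap_u : shift_gap p (rev u) = if signature u == 0 then p - 3 else p - 2.
  by rewrite /shift_gap signature_rev.
have shift_digits n : [seq rcons w h.+1 | h <- iota 1 n] = [seq rcons w h | h <- iota 2 n].
  by rewrite (iotaDl 1 1) -map_comp.
rewrite /S /nsons in codes *; rewrite shift_digits.
split; [move=> B | split; [move=> /negbTE W s0 |
                     split; [move=> /negbTE W s1 | move=> /negbTE W s2]]].
- have sig := is_black_signature p5 nu_gt0 Cu B; split=> //.
  apply (codes 2 (p - 4) 1); rewrite ?fsd_w ?B ?gap_u //; try case: eqP => ? /=; lia.
- apply (codes 1 (p - 4) 2); rewrite ?fsd_w ?W ?gap_u ?s0 //; try case: eqP => ? /=; lia.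
- apply (codes 2 (p - 4) 2); rewrite ?fsd_w ?W ?gap_u ?s1 //; try case: eqP => ? /=; lia.
- apply (codes 1 (p - 3) 1); rewrite ?fsd_w ?W ?gap_u //; try case: eqP => ? /=; lia.
Qed.
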